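(* Let $G$ be any GP 2 host graph in which every node is marked grey and is not a root, and every edge is unmarked (node and edge labels arbitrary; parallel edges and loops allowed). Then the execution of the GP 2 program is-connected on $G$ terminates, and: if $G$ is connected, it does not fail and returns a host graph isomorphic to $G$ up to marks; if $G$ is not connected, it fails. (That is, is-connected is totally correct with respect to this input/output specification.)
   Context: A graph is connected if for every pair of distinct nodes $u,v$ there is a path of edges from $u$ to $v$ regardless of edge directions (the empty graph and one-node graphs are connected). ''Isomorphic up to marks'' means isomorphic when node/edge marks (and root status) are ignored, i.e. same nodes, edges, incidences and labels. GP 2 semantics. Host graphs are finite directed graphs (parallel edges and loops allowed); every node and edge carries a label (a list of integers and strings) and a mark: nodes are unmarked or red, green, blue or grey; edges are unmarked or red, green, blue or dashed. Some nodes are roots. A rule consists of a left-hand graph $L$ and a right-hand graph $R$ sharing an interface of nodes; labels may contain variables; a rule item with mark ''any'' matches any mark. A rule is applied to a host graph by finding an injective morphism from $L$ into the host graph compatible with labels (for some instantiation of the variables) and marks, mapping roots of $L$ to roots, satisfying the dangling condition (deleted nodes must not be incident with unmatched edges) and the rule's condition; then matched items are deleted/changed/added as prescribed by $R$ (interface nodes take the mark, label and root status given in $R$). Commands: calling a rule or rule set $\{r_1,\dots,r_k\}$ applies one applicable rule and fails if none applies; $P;Q$ is sequencing; $P!$ executes $P$ repeatedly until it fails, returning the graph on which $P$ was last entered, and a break inside the loop body terminates the loop returning the current graph; ''try $C$ then $P$ else $Q$'' executes $C$ and, if $C$ succeeds, continues with $P$ on its result, otherwise executes $Q$ on the original graph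 (a missing branch means do nothing); ''if $C$ then $P$ else $Q$'' executes $C$ on a copy and then $P$ (if $C$ succeeded) or $Q$ (if $C$ failed) on the original graph; fail causes failure of the program. The program is-connected (variables x,y,z of type list; all rules keep all labels unchanged): Main = try init then (DFS!; Check); DFS = FORWARD!; try back else break; FORWARD = next_edge; {move, ignore}; Check = if match then fail. In all rules below the edge between nodes 1 and 2 is undirected: it matches a host edge in either direction, and the host edge keeps its direction. - init: a grey non-root node becomes a blue root. - match: a grey node; no change (used as a test). - next_edge: a blue root 1 and a node 2 of any mark joined by an unmarked edge; the edge becomes red. - ignore: a blue root 1 and a blue node 2 joined by a red edge; the edge becomes blue. - move: a blue root 1 and a grey node 2 joined by a red edge; node 1 becomes a non-root (still blue), node 2 becomes a blue root, the edge becomes dashed. - back: a blue non-root node 1 and a blue root 2 joined by a dashed edge; node 1 becomes a root, node 2 a non-root (still blue), the edge becomes blue. *)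

From Stdlib Require String.
From HB Require Import structures.
From mathcomp Require Import all_boot all_order all_algebra.
Set Implicit Arguments. Unset Strict Implicit. Unset Printing Implicit Defensive.

Inductive atom := AInt of int | AStr of String.string.
Definition label := seq atom.

Inductive nmark := NUnmarked | NRed | NGreen | NBlue | NGrey.
Inductive emark := EUnmarked | ERed | EGreen | EBlue | EDashed.

Record hgraph := HGraph {
  V : finType;
  E : finType;
  src : E -> V;
  tgt : E -> V;
  vlab : V -> label;
  elab : E -> label;
  vmark : V -> nmark;
  emk : E -> emark;
  root : V -> bool }.

Definition remark (G : hgraph) (vm : V G -> nmark) (em : E G -> emark)
  (rt : V G -> bool) : hgraph :=
  @HGraph (V G) (E G) (@src G) (@tgt G) (@vlab G) (@elab G) vm em rt.

Definition upd (T : eqType) (A : Type) (f : T -> A) (x : T) (a : A) : T -> A :=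
  fun y => if y == x then a else f y.

Definition uadj (G : hgraph) : rel (V G) :=
  fun u v => [exists e : E G, ((src e == u) && (tgt e == v))
                            || ((src e == v) && (tgt e == u))].

Definition gconnected (G : hgraph) : Prop :=
  forall u v : V G, connect (@uadj G) u v.

Definition iso_up_to_marks (G H : hgraph) : Prop :=
  exists (fV : V G -> V H) (fE : E G -> E H),
    bijective fV /\ bijective fE /\
    (forall e, src (fE e) = fV (src e)) /\
    (forall e, tgt (fE e) = fV (tgt e)) /\
    (forall v, vlab (fV v) = vlab v) /\
    (forall e, elab (fE e) = elab e).

(* All variables x,y,z are of type list, so labels impose no constraint and
   are kept unchanged.  Nodes of L that are roots must be matched to roots;
   non-root nodes of L may match any node.  Interface nodes take the mark and
   root status given in R. *)

(* Generic two-node rule with an undirected edge between distinct nodes 1,2.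
   m2 = None means "mark any" (in L and R: mark unchanged). *)
Definition erule (m1 : nmark) (r1 : bool) (m2 : option nmark) (r2 : bool)
  (me : emark) (m1' : nmark) (r1' : bool) (m2' : option nmark) (r2' : bool)
  (me' : emark) (G H : hgraph) : Prop :=
  exists (v1 v2 : V G) (e : E G),
    v1 != v2 /\
    ((src e = v1 /\ tgt e = v2) \/ (src e = v2 /\ tgt e = v1)) /\
    vmark v1 = m1 /\ (r1 ==> root v1) /\
    (if m2 is Some m then vmark v2 = m else True) /\ (r2 ==> root v2) /\
    emk e = me /\
    H = remark (upd (upd (@vmark G) v1 m1') v2
                    (if m2' is Some m then m else vmark v2))
               (upd (@emk G) e me')
               (upd (upd (@root G) v1 r1') v2 r2').

Inductive rname := r_init | r_match | r_next_edge | r_ignore | r_move | r_back.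

Definition apply_rule (r : rname) (G H : hgraph) : Prop :=
  match r with
  | r_init => exists v : V G, vmark v = NGrey /\
              H = remark (upd (@vmark G) v NBlue) (@emk G) (upd (@root G) v true)
  | r_match => exists v : V G, vmark v = NGrey /\ H = G
  | r_next_edge => erule NBlue true None false EUnmarked
                         NBlue true None false ERed G H
  | r_ignore => erule NBlue true (Some NBlue) false ERed
                      NBlue true (Some NBlue) false EBlue G H
  | r_move => erule NBlue true (Some NGrey) false ERed
                    NBlue false (Some NBlue) true EDashed G H
  | r_back => erule NBlue false (Some NBlue) true EDashed
                    NBlue true (Some NBlue) false EBlue G H
  end.

Inductive cmd :=
  | Call of seq rname            (* a rule or rule set {r1,...,rk} *)
  | Seq of cmd & cmd
  | Loop of cmd
  | Try of cmd & cmd & cmd       (* try C then P else Q *)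
  | If of cmd & cmd & cmd        (* if C then P else Q *)
  | Break
  | FailC
  | Skip.

(* Outcomes: success with a graph, failure, a pending break (with the current
   graph), or "fuel exhausted" (used to express termination). *)
Inductive result := ROk of hgraph | RFail | RBrk of hgraph | RDiv.

(* exec n P G r : some execution of P on G, where every loop may perform at
   most n further iterations (fuel), yields r.  RDiv means the fuel ran out. *)
Inductive exec : nat -> cmd -> hgraph -> result -> Prop :=
  | ex_call_ok n rs r G H : List.In r rs -> apply_rule r G H -> exec n (Call rs) G (ROk H)
  | ex_call_fail n rs G : (forall r H, List.In r rs -> ~ apply_rule r G H) ->
      exec n (Call rs) G RFail
  | ex_seq_ok n P Q G H res : exec n P G (ROk H) -> exec n Q H res -> exec n (Seq P Q) G res
  | ex_seq_fail n P Q G : exec n P G RFail -> exec n (Seq P Q) G RFail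
  | ex_seq_brk n P Q G H : exec n P G (RBrk H) -> exec n (Seq P Q) G (RBrk H)
  | ex_seq_div n P Q G : exec n P G RDiv -> exec n (Seq P Q) G RDiv
  | ex_loop_nofuel P G : exec 0 (Loop P) G RDiv
  | ex_loop_stop n P G : exec n.+1 P G RFail -> exec n.+1 (Loop P) G (ROk G)
  | ex_loop_brk n P G H : exec n.+1 P G (RBrk H) -> exec n.+1 (Loop P) G (ROk H)
  | ex_loop_div n P G : exec n.+1 P G RDiv -> exec n.+1 (Loop P) G RDiv
  | ex_loop_step n P G H res : exec n.+1 P G (ROk H) -> exec n (Loop P) H res ->
      exec n.+1 (Loop P) G res
  | ex_try_ok n C P Q G H res : exec n C G (ROk H) -> exec n P H res ->
      exec n (Try C P Q) G res
  | ex_try_fail n C P Q G res : exec n C G RFail -> exec n Q G res ->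
      exec n (Try C P Q) G res
  | ex_try_brk n C P Q G H : exec n C G (RBrk H) -> exec n (Try C P Q) G (RBrk H)
  | ex_try_div n C P Q G : exec n C G RDiv -> exec n (Try C P Q) G RDiv
  | ex_if_ok n C P Q G H res : exec n C G (ROk H) -> exec n P G res ->
      exec n (If C P Q) G res
  | ex_if_fail n C P Q G res : exec n C G RFail -> exec n Q G res ->
      exec n (If C P Q) G res
  | ex_if_brk n C P Q G H : exec n C G (RBrk H) -> exec n (If C P Q) G (RBrk H)
  | ex_if_div n C P Q G : exec n C G RDiv -> exec n (If C P Q) G RDiv
  | ex_break n G : exec n Break G (RBrk G)
  | ex_fail n G : exec n FailC G RFail
  | ex_skip n G : exec n Skip G (ROk G).

Definition FORWARD : cmd := Seq (Call [:: r_next_edge]) (Call [:: r_move; r_ignore]).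
Definition DFS : cmd := Seq (Loop FORWARD) (Try (Call [:: r_back]) Skip Break).
Definition Check : cmd := If (Call [:: r_match]) FailC Skip.
Definition is_connected : cmd := Try (Call [:: r_init]) (Seq (Loop DFS) Check) Skip.

Definition initial_graph (G : hgraph) : Prop :=
  (forall v : V G, vmark v = NGrey /\ root v = false) /\
  (forall e : E G, emk e = EUnmarked).

From mathcomp Require Import all_boot zify.
From Stdlib Require Import Classical FunctionalExtensionality.
Set Implicit Arguments. Unset Strict Implicit. Unset Printing Implicit Defensive.

(* Running [init] on a node s starts a depth-first search from s.  Between iterations, the
   blue nodes are visited nodes reachable from s; the dashed edges form the search stack, a
   repetition-free path from s to the root; and every blue node off the stack, as well as the
   root once FORWARD! has stopped, has no unmarked non-loop edge left.  Every iteration of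
   either loop lowers a weighted count of the edge marks, which bounds the fuel needed, and
   DFS! breaks exactly when the stack is empty and s is finished.  The blue nodes are then
   closed under adjacency, hence form the component of s, so [match] finds a grey node iff the
   graph is disconnected.  Only marks and roots ever change. *)

Lemma exec_Call_inv n rs X r : exec n (Call rs) X r ->
  (exists rn Y, List.In rn rs /\ apply_rule rn X Y /\ r = ROk Y) \/
  (r = RFail /\ forall rn Y, List.In rn rs -> ~ apply_rule rn X Y).
Proof. by move=> ex; inversion ex; subst; eauto 10. Qed.

Lemma exec_Seq_inv n P Q X r : exec n (Seq P Q) X r ->
  (exists Y, exec n P X (ROk Y) /\ exec n Q Y r) \/
  (r = RFail /\ exec n P X RFail) \/
  (exists Y, r = RBrk Y /\ exec n P X (RBrk Y)) \/
  (r = RDiv /\ exec n P X RDiv).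
Proof. by move=> ex; inversion ex; subst; eauto 10. Qed.

Lemma exec_LoopS_inv n P X r : exec n.+1 (Loop P) X r ->
  (exec n.+1 P X RFail /\ r = ROk X) \/
  (exists Y, exec n.+1 P X (RBrk Y) /\ r = ROk Y) \/
  (exec n.+1 P X RDiv /\ r = RDiv) \/
  (exists Y, exec n.+1 P X (ROk Y) /\ exec n (Loop P) Y r).
Proof. by move=> ex; inversion ex; subst; eauto 10. Qed.

Lemma exec_Try_inv n C P Q X r : exec n (Try C P Q) X r ->
  (exists Y, exec n C X (ROk Y) /\ exec n P Y r) \/
  (exec n C X RFail /\ exec n Q X r) \/
  (exists Y, r = RBrk Y /\ exec n C X (RBrk Y)) \/
  (r = RDiv /\ exec n C X RDiv).
Proof. by move=> ex; inversion ex; subst; eauto 10. Qed.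

Lemma exec_If_inv n C P Q X r : exec n (If C P Q) X r ->
  (exists Y, exec n C X (ROk Y) /\ exec n P X r) \/
  (exec n C X RFail /\ exec n Q X r) \/
  (exists Y, r = RBrk Y /\ exec n C X (RBrk Y)) \/
  (r = RDiv /\ exec n C X RDiv).
Proof. by move=> ex; inversion ex; subst; eauto 10. Qed.

Lemma exec_Skip_inv n X r : exec n Skip X r -> r = ROk X.
Proof. by move=> ex; inversion ex. Qed.

Lemma exec_Break_inv n X r : exec n Break X r -> r = RBrk X.
Proof. by move=> ex; inversion ex. Qed.

Lemma exec_FailC_inv n X r : exec n FailC X r -> r = RFail.
Proof. by move=> ex; inversion ex. Qed.

Lemma exec_Call_noBrk n rs X Y : ~ exec n (Call rs) X (RBrk Y).
Proof. by case/exec_Call_inv => [[? [? [_ [_ //]]]] | []]. Qed.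

Lemma exec_Call_noDiv n rs X : ~ exec n (Call rs) X RDiv.
Proof. by case/exec_Call_inv => [[? [? [_ [_ //]]]] | []]. Qed.

Lemma exec_Call1_ok n rn X Y : exec n (Call [:: rn]) X (ROk Y) -> apply_rule rn X Y.
Proof. by case/exec_Call_inv => [[? [? [[<- | []] [? [->]]]]] | []]. Qed.

Lemma exec_Call1_fail n rn X Y : exec n (Call [:: rn]) X RFail -> ~ apply_rule rn X Y.
Proof. by case/exec_Call_inv => [[? [? [_ [_ //]]]] | [_ /(_ rn Y)]]; apply; left. Qed.

Lemma exec_Call2_inv n r1 r2 X r : exec n (Call [:: r1; r2]) X r ->
  (exists Y, r = ROk Y /\ (apply_rule r1 X Y \/ apply_rule r2 X Y)) \/
  (r = RFail /\ forall Y, ~ apply_rule r1 X Y /\ ~ apply_rule r2 X Y).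
Proof.
case/exec_Call_inv => [[rn [Y [rs_rn [app ->]]]] | [-> disabled]].
- by left; exists Y; split=> //; case: rs_rn app => [<- | [<- | []]]; [left | right].
- by right; split=> // Y; split; apply: disabled; [left | right; left].
Qed.

Lemma exec_total c n X : exists r, exec n c X r.
Proof.
elim: c n X => [rs | P IHP Q IHQ | P IHP | C IHC P IHP Q IHQ | C IHC P IHP Q IHQ | | |] n X.
- have [[rn [Y [rs_rn app]]] | disabled] :=
    classic (exists rn Y, List.In rn rs /\ apply_rule rn X Y).
  + by exists (ROk Y); apply: ex_call_ok app.
  + by exists RFail; apply: ex_call_fail => rn Y rs_rn app; apply: disabled; exists rn, Y.
- case: (IHP n X) => [[Y | | Y |] exP].
  + by have [r exQ] := IHQ n Y; exists r; apply: ex_seq_ok exP exQ.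
  + by exists RFail; apply: ex_seq_fail.
  + by exists (RBrk Y); apply: ex_seq_brk.
  + by exists RDiv; apply: ex_seq_div.
- elim: n X => [|n IHn] X; first by exists RDiv; constructor.
  case: (IHP n.+1 X) => [[Y | | Y |] exP].
  + by have [r exL] := IHn Y; exists r; apply: ex_loop_step exP exL.
  + by exists (ROk X); apply: ex_loop_stop.
  + by exists (ROk Y); apply: ex_loop_brk exP.
  + by exists RDiv; apply: ex_loop_div.
- case: (IHC n X) => [[Y | | Y |] exC].
  + by have [r exP] := IHP n Y; exists r; apply: ex_try_ok exC exP.
  + by have [r exQ] := IHQ n X; exists r; apply: ex_try_fail exC exQ.
  + by exists (RBrk Y); apply: ex_try_brk.
  + by exists RDiv; apply: ex_try_div.
- case: (IHC n X) => [[Y | | Y |] exC].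
  + by have [r exP] := IHP n X; exists r; apply: ex_if_ok exC exP.
  + by have [r exQ] := IHQ n X; exists r; apply: ex_if_fail exC exQ.
  + by exists (RBrk Y); apply: ex_if_brk.
  + by exists RDiv; apply: ex_if_div.
- by exists (RBrk X); constructor.
- by exists RFail; constructor.
- by exists (ROk X); constructor.
Qed.

(* Total-correctness rule for [P!] with invariant [I m] and variant [m]: entered with fuel
   above the variant, the loop never runs out of fuel. *)
Lemma exec_Loop_variant (P : cmd) (I Q : nat -> hgraph -> Prop) :
  (forall n m X r, m < n -> I m X -> exec n P X r ->
     (r = RFail /\ Q m X) \/ (exists Y, r = RBrk Y /\ Q m Y) \/
     (exists m' Y, r = ROk Y /\ m' < m /\ I m' Y)) ->
  forall n m X r, m < n -> I m X -> exec n (Loop P) X r ->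
    exists m' Y, r = ROk Y /\ m' <= m /\ Q m' Y.
Proof.
move=> step; elim=> [|n IHn] m X r // lt_mn IX /exec_LoopS_inv.
case=> [[body ->] | [[Y [body ->]] | [[body ->] | [Y [body loop]]]]];
  case: (step _ _ _ _ lt_mn IX body) =>
    [[// _ QX] | [[Z [// [<-] QZ]] | [m' [Z [// [<-] [lt_m'm IZ]]]]]].
- by exists m, X.
- by exists m, Y.
- have [m'' [W [-> [le_m''m' QW]]]] := IHn _ _ _ (leq_trans lt_m'm lt_mn) IZ loop.
  by exists m'', W; split=> //; split=> //; apply: leq_trans le_m''m' (ltnW lt_m'm).
Qed.

Section Walks.
Variable G : hgraph.
Implicit Types (x y : V G) (e : E G) (p : seq (V G * E G)).

Definition joins e x y : Prop := (src e = x /\ tgt e = y) \/ (src e = y /\ tgt e = x).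

Definition links_out e x : Prop := exists2 y, x != y & joins e x y.

Fixpoint walk x p : Prop := if p is (y, e) :: p' then joins e x y /\ walk y p' else True.

Lemma joins_sym e x y : joins e x y -> joins e y x.
Proof. by rewrite /joins; tauto. Qed.

Lemma joins_injl e x y z : joins e x z -> joins e y z -> x = y.
Proof. by rewrite /joins; case=> [[<- <-] | [<- <-]] [[] | []]; congruence. Qed.

Lemma joins_uadj e x y : joins e x y -> uadj x y.
Proof.
by move=> j; apply/existsP; exists e; case: j => [[-> ->] | [-> ->]]; rewrite !eqxx ?orbT.
Qed.

Lemma uadj_joins x y : uadj x y -> exists e, joins e x y.
Proof.
by case/existsP=> e /orP [/andP [/eqP ? /eqP ?] | /andP [/eqP ? /eqP ?]]; exists e; [left | right].
Qed.

Lemma uadj_sym : symmetric (@uadj G).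
Proof. by move=> x y; apply: eq_existsb => e; rewrite orbC. Qed.

Lemma gconnected_from x : gconnected G <-> forall y, connect (@uadj G) x y.
Proof.
split=> [conn y | conn y z]; first exact: conn.
by apply: connect_trans (conn z); rewrite (sym_connect_sym uadj_sym).
Qed.

Lemma walk_rcons x p y e :
  walk x (rcons p (y, e)) <-> walk x p /\ joins e (last x (map fst p)) y.
Proof. by elim: p x => [|[z f] p IHp] x /=; rewrite ?IHp; tauto. Qed.

Lemma walk_edge_end x p e y z :
  walk x p -> e \in map snd p -> joins e y z -> y \in x :: map fst p.
Proof.
elim: p x => [|[x' f] p IHp] x //= [jf wp]; rewrite !inE => /orP [/eqP -> | ep] je.
- by case: jf je => [[<- <-] | [<- <-]] [[-> _] | [_ ->]]; rewrite eqxx ?orbT.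
- by have := IHp x' wp ep je; rewrite inE => ->; rewrite orbT.
Qed.

End Walks.

(* FORWARD turns an unmarked edge dashed or blue, and back turns a dashed edge blue. *)
Definition emark_weight (m : emark) : nat :=
  match m with EUnmarked => 2 | ERed | EDashed => 1 | EGreen | EBlue => 0 end.

Definition weight (G : hgraph) (em : E G -> emark) : nat := \sum_(e : E G) emark_weight (em e).

Lemma weight_upd (G : hgraph) (em : E G -> emark) e m :
  weight (upd em e m) + emark_weight (em e) = weight em + emark_weight m.
Proof.
rewrite /weight (bigD1 e) //= [in RHS](bigD1 e) //= /upd eqxx.
rewrite (eq_bigr (fun f => emark_weight (em f))) => [|f /negbTE -> //]; lia.
Qed.

Section DepthFirstSearch.
Variables (G : hgraph) (s : V G).
Implicit Types (st : seq (V G * E G)) (vm : V G -> nmark) (em : E G -> emark).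

(* The search stack is [s] followed by the frames [(v, e)] of [st], where the node [v] was
   entered through the (dashed) edge [e]; the root of the graph is the top of the stack. *)
Definition state vm em (t : V G) : hgraph := remark vm em (fun x => x == t).
Definition stack st : seq (V G) := s :: map fst st.
Definition top st : V G := last s (map fst st).
Definition top_done st em : Prop := forall e, links_out e (top st) -> em e <> EUnmarked.

Lemma top_rcons st v e : top (rcons st (v, e)) = v.
Proof. by rewrite /top map_rcons last_rcons. Qed.

Lemma stack_rcons st v e : stack (rcons st (v, e)) = rcons (stack st) v.
Proof. by rewrite /stack map_rcons rcons_cons. Qed.

Lemma top_in_stack st : top st \in stack st.
Proof. exact: mem_last. Qed.

Record dfs_inv st vm em : Prop := {
  grey_or_blue : forall x, vm x = NGrey \/ vm x = NBlue;
  no_red : forall e, em e <> ERed;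
  marked_edge_blue : forall e, em e <> EUnmarked -> vm (src e) = NBlue /\ vm (tgt e) = NBlue;
  blue_reachable : forall x, vm x = NBlue -> connect (@uadj G) s x;
  dashed_stack : forall e, em e = EDashed <-> e \in map snd st;
  stack_uniq : uniq (stack st);
  stack_edges_uniq : uniq (map snd st);
  stack_walk : walk s st;
  stack_blue : forall x, x \in stack st -> vm x = NBlue;
  off_stack_done : forall x e,
    vm x = NBlue -> x \notin stack st -> links_out e x -> em e <> EUnmarked }.

Lemma next_edge_step st vm em Y : dfs_inv st vm em ->
  apply_rule r_next_edge (state vm em (top st)) Y ->
  exists v e, top st != v /\ joins e (top st) v /\ em e = EUnmarked /\
    Y = state vm (upd em e ERed) (top st).
Proof.
move=> inv [t [v [e [tv [j [/= blue_t [/= /eqP def_t [_ [_ [/= unm ->]]]]]]]]]].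
subst t; exists v, e; do 3!split=> //.
rewrite /state; congr remark; apply: functional_extensionality => x.
- by rewrite /upd; case: ifP => [/eqP -> | _] //; case: ifP => [/eqP -> |].
- by rewrite /upd; case: ifP => [/eqP -> | _]; [rewrite eq_sym (negbTE tv) | case: ifP].
Qed.

Lemma red_edge_unique st vm em e f : dfs_inv st vm em -> upd em e ERed f = ERed -> f = e.
Proof. by move=> inv; rewrite /upd; case: eqP => // _ /(no_red inv). Qed.

Lemma move_step st vm em e v Y : dfs_inv st vm em -> joins e (top st) v ->
  apply_rule r_move (state vm (upd em e ERed) (top st)) Y ->
  vm v = NGrey /\ Y = state (upd vm v NBlue) (upd em e EDashed) v.
Proof.
move=> inv j [t [w [f [tw [j' [/= blue_t]]]]]].
case=> /= /eqP def_t [/= grey_w [_ [/= /(red_edge_unique inv) fe ->]]].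
subst t f; have wv : w = v := joins_injl (joins_sym j') (joins_sym j); subst w.
split=> //; rewrite /state; congr remark; apply: functional_extensionality => x.
- by rewrite /upd; case: ifP => // _; case: ifP => [/eqP -> |].
- by rewrite /upd; case: ifP => // ->.
- by rewrite /upd; case: ifP => // _; case: ifP.
Qed.

Lemma ignore_step st vm em e v Y : dfs_inv st vm em -> joins e (top st) v ->
  apply_rule r_ignore (state vm (upd em e ERed) (top st)) Y ->
  vm v = NBlue /\ Y = state vm (upd em e EBlue) (top st).
Proof.
move=> inv j [t [w [f [tw [j' [/= blue_t]]]]]].
case=> /= /eqP def_t [/= blue_w [_ [/= /(red_edge_unique inv) fe ->]]].
subst t f; have wv : w = v := joins_injl (joins_sym j') (joins_sym j); subst w.
split=> //; rewrite /state; congr remark; apply: functional_extensionality => x.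
- by rewrite /upd; case: ifP => [/eqP -> | _] //; case: ifP => [/eqP -> |].
- by rewrite /upd; case: ifP => // ->.
- by rewrite /upd; case: ifP => [/eqP -> | _]; [rewrite eq_sym (negbTE tw) | case: ifP].
Qed.

Lemma back_step st vm em Y : dfs_inv st vm em ->
  apply_rule r_back (state vm em (top st)) Y ->
  exists st' u e, st = rcons st' (u, e) /\ Y = state vm (upd em e EBlue) (top st').
Proof.
move=> inv [w [t [f]]].
(* The matched items are typed in [V (state vm em (top st))]; retype them so [st] can be split. *)
change (V G : Type) in w; change (V G : Type) in t; change (E G : Type) in f.
case=> wt [j [/= blue_w [_ [/= blue_t [/= /eqP def_t [/= /(dashed_stack inv) f_st ->]]]]]].
subst t; case/lastP: st inv j wt blue_t f_st => [// | st [u e]] inv.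
have /walk_rcons [w_st je] := stack_walk inv.
rewrite top_rcons map_rcons mem_rcons inE => j wu blue_u /orP [/eqP fe | f_st]; last first.
  have := stack_uniq inv; rewrite stack_rcons rcons_uniq.
  by rewrite (walk_edge_end w_st f_st (joins_sym j)).
subst f; exists st, u, e; split=> //.
have def_w : w = top st := joins_injl j je; subst w.
rewrite /state; congr remark; apply: functional_extensionality => x.
- by rewrite /upd; case: ifP => [/eqP -> | _] //; case: ifP => [/eqP -> |].
- by rewrite /upd; case: ifP => [/eqP -> | ->]; [rewrite eq_sym (negbTE wu) | case: ifP].
Qed.

Lemma next_edge_enabled st vm em e : dfs_inv st vm em -> links_out e (top st) ->
  em e = EUnmarked -> exists Y, apply_rule r_next_edge (state vm em (top st)) Y.
Proof.
move=> inv [v tv j] unm; have blue_t := stack_blue inv (top_in_stack st).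
by eexists; exists (top st), v, e; do !split; rewrite /= ?eqxx.
Qed.

Lemma move_or_ignore_enabled st vm em e v : dfs_inv st vm em -> top st != v ->
  joins e (top st) v -> exists Y,
    apply_rule r_move (state vm (upd em e ERed) (top st)) Y \/
    apply_rule r_ignore (state vm (upd em e ERed) (top st)) Y.
Proof.
move=> inv tv j; have blue_t := stack_blue inv (top_in_stack st).
by case: (grey_or_blue inv v) => col_v; eexists; [left | right];
  exists (top st), v, e; do !split; rewrite /= ?eqxx /upd ?eqxx.
Qed.

Lemma back_enabled st u e vm em : dfs_inv (rcons st (u, e)) vm em ->
  exists Y, apply_rule r_back (state vm em (top (rcons st (u, e)))) Y.
Proof.
move=> inv; have := stack_uniq inv; rewrite stack_rcons rcons_uniq => /andP [u_st _].
have /walk_rcons [_ je] := stack_walk inv.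
have blue x : x \in rcons (stack st) u -> vm x = NBlue.
  by rewrite -(stack_rcons st u e) => /(stack_blue inv).
have dashed_e : em e = EDashed.
  by apply/(dashed_stack inv); rewrite map_rcons mem_rcons mem_head.
rewrite top_rcons; eexists; exists (top st), u, e; split.
  by apply: contraNneq u_st => <-; apply: top_in_stack.
by do !split; rewrite /= ?eqxx ?blue // ?mem_rcons ?mem_head // inE top_in_stack orbT.
Qed.

Lemma dfs_inv_push st vm em e v : dfs_inv st vm em -> joins e (top st) v ->
  vm v = NGrey -> em e = EUnmarked ->
  dfs_inv (rcons st (v, e)) (upd vm v NBlue) (upd em e EDashed).
Proof.
case=> col red marked reach dashed uniq_st uniq_e walk_st blue_st off_done j grey_v unm_e.
have blue_t := blue_st _ (top_in_stack st).
have v_off : v \notin stack st by apply/negP => /blue_st; rewrite grey_v.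
have e_off : e \notin map snd st by apply/negP => /dashed; rewrite unm_e.
have blue_v : upd vm v NBlue v = NBlue by rewrite /upd eqxx.
have blue_upd x : vm x = NBlue -> upd vm v NBlue x = NBlue by rewrite /upd; case: ifP.
split.
- by move=> x; rewrite /upd; case: ifP => _; [right | apply: col].
- by move=> f; rewrite /upd; case: ifP => // _ /red.
- move=> f; rewrite {1}/upd; case: eqP => [-> _ | _ /marked [? ?]]; last by rewrite !blue_upd.
  by have := blue_upd _ blue_t; case: j => [[-> ->] | [-> ->]].
- move=> x; rewrite /upd; case: eqP => [-> _ | _ /reach //].
  exact: connect_trans (reach _ blue_t) (connect1 (joins_uadj j)).
- move=> f; rewrite /upd map_rcons mem_rcons inE.
  by case: eqP => _; [split | apply: dashed].
- by rewrite stack_rcons rcons_uniq v_off uniq_st.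
- by rewrite map_rcons rcons_uniq e_off uniq_e.
- exact/walk_rcons.
- move=> x; rewrite stack_rcons mem_rcons inE => /orP [/eqP -> // | /blue_st].
  exact: blue_upd.
- move=> x f; rewrite stack_rcons mem_rcons inE negb_or {1}/upd => + /andP [xv x_off] out.
  rewrite (negbTE xv) => blue_x; rewrite /upd; case: ifP => // _.
  exact: off_done blue_x x_off out.
Qed.

Lemma dfs_inv_ignore st vm em e v : dfs_inv st vm em -> joins e (top st) v ->
  vm v = NBlue -> em e = EUnmarked -> dfs_inv st vm (upd em e EBlue).
Proof.
case=> col red marked reach dashed uniq_st uniq_e walk_st blue_st off_done j blue_v unm_e.
have blue_t := blue_st _ (top_in_stack st).
have e_off : e \notin map snd st by apply/negP => /dashed; rewrite unm_e.
split=> //.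
- by move=> f; rewrite /upd; case: ifP => // _ /red.
- move=> f; rewrite /upd; case: eqP => [-> _ | _ /marked //].
  by case: j => [[-> ->] | [-> ->]].
- move=> f; rewrite /upd; case: eqP => [-> | _]; last exact: dashed.
  by split=> // e_st; rewrite e_st in e_off.
- move=> x f blue_x x_off out; rewrite /upd; case: ifP => // _.
  exact: off_done blue_x x_off out.
Qed.

Lemma dfs_inv_pop st u e vm em : dfs_inv (rcons st (u, e)) vm em ->
  top_done (rcons st (u, e)) em -> dfs_inv st vm (upd em e EBlue).
Proof.
case=> col red marked reach dashed uniq_st uniq_e walk_st blue_st off_done top_u.
move: uniq_st uniq_e walk_st; rewrite stack_rcons map_rcons !rcons_uniq.
move=> /andP [_ uniq_st] /andP [e_off uniq_e] /walk_rcons [walk_st _].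
have dashed_e : em e = EDashed by apply/dashed; rewrite map_rcons mem_rcons mem_head.
split=> //.
- by move=> f; rewrite /upd; case: ifP => // _ /red.
- move=> f; rewrite /upd; case: eqP => [-> _ | _ /marked //].
  by apply: marked; rewrite dashed_e.
- move=> f; rewrite /upd; case: eqP => [-> | fe]; first by split=> // e_st; rewrite e_st in e_off.
  by rewrite dashed map_rcons mem_rcons inE; case: eqP.
- by move=> x x_st; apply: blue_st; rewrite stack_rcons mem_rcons inE x_st orbT.
- move=> x f blue_x x_off out; rewrite /upd; case: ifP => // _.
  have [xu | xu] := eqVneq x u; first by apply: top_u; rewrite top_rcons -xu.
  by apply: off_done blue_x _ out; rewrite stack_rcons mem_rcons inE negb_or xu.
Qed.

Definition dfs_state (m : nat) (X : hgraph) : Prop :=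
  exists st vm em, X = state vm em (top st) /\ dfs_inv st vm em /\ weight em = m.

Definition forward_stopped (m : nat) (X : hgraph) : Prop :=
  exists st vm em, X = state vm em (top st) /\ dfs_inv st vm em /\ weight em = m /\
    top_done st em.

Definition dfs_finished (X : hgraph) : Prop :=
  exists vm em, X = state vm em s /\ dfs_inv [::] vm em /\ top_done [::] em.

Lemma forward_spec n m X r : dfs_state m X -> exec n FORWARD X r ->
  (r = RFail /\ forward_stopped m X) \/ (exists m' Y, r = ROk Y /\ m' < m /\ dfs_state m' Y).
Proof.
move=> [st [vm [em [-> [inv <-]]]]].
case/exec_Seq_inv => [[Y [next choose]] |
  [[-> next] | [[Y [_ /exec_Call_noBrk []]] | [_ /exec_Call_noDiv []]]]].
- have [v [e [tv [j [unm_e def_Y]]]]] := next_edge_step inv (exec_Call1_ok next); subst Y.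
  have := weight_upd em e; rewrite unm_e => weight_e.
  case/exec_Call2_inv: choose =>
    [[Z [-> [/(move_step inv j) | /(ignore_step inv j)]]] | [-> disabled]].
  + move=> [grey_v ->]; right; exists (weight (upd em e EDashed)); eexists.
    split; first reflexivity.
    split; first by have := weight_e EDashed; rewrite /=; lia.
    exists (rcons st (v, e)), (upd vm v NBlue), (upd em e EDashed).
    by rewrite top_rcons; split=> //; split=> //; apply: dfs_inv_push.
  + move=> [blue_v ->]; right; exists (weight (upd em e EBlue)); eexists.
    split; first reflexivity.
    split; first by have := weight_e EBlue; rewrite /=; lia.
    by exists st, vm, (upd em e EBlue); split=> //; split=> //; apply: dfs_inv_ignore j _ _.
  + have [Z [mv | ig]] := move_or_ignore_enabled inv tv j.
    * by case: (disabled Z) => /(_ mv).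
    * by case: (disabled Z) => _ /(_ ig).
- left; split=> //; exists st, vm, em; do 3!split=> //.
  move=> e out unm_e; have [Y app] := next_edge_enabled inv out unm_e.
  exact: exec_Call1_fail next app.
Qed.

Lemma forward_loop_spec n m X r : m < n -> dfs_state m X -> exec n (Loop FORWARD) X r ->
  exists m' Y, r = ROk Y /\ m' <= m /\ forward_stopped m' Y.
Proof.
apply: exec_Loop_variant => {}n {}m {}X {}r _ IX /(forward_spec IX).
by case=> [? | ?]; [left | right; right].
Qed.

Lemma dfs_body_spec n m X r : m < n -> dfs_state m X -> exec n DFS X r ->
  (exists Y, r = RBrk Y /\ dfs_finished Y) \/ (exists m' Y, r = ROk Y /\ m' < m /\ dfs_state m' Y).
Proof.
move=> lt_mn IX /exec_Seq_inv.
case=> [[Y [fwd bk]] | [[_ fwd] | [[Y [_ fwd]] | [_ fwd]]]];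
  have [m1 [Z [// [def_Y] [le_m1m [st [vm [em [def_Z [inv [weight_em top_u]]]]]]]]]] :=
    forward_loop_spec lt_mn IX fwd.
subst Z Y.
case/exec_Try_inv: bk => [[Z [/exec_Call1_ok back /exec_Skip_inv ->]] |
  [[back_off /exec_Break_inv ->] | [[Z [_ /exec_Call_noBrk []]] | [_ /exec_Call_noDiv []]]]].
- have [st' [u [e [def_st ->]]]] := back_step inv back; subst st.
  right; exists (weight (upd em e EBlue)); eexists; split; first reflexivity.
  split; last by exists st', vm, (upd em e EBlue); do 2!split=> //; apply: dfs_inv_pop inv top_u.
  have dashed_e : em e = EDashed.
    by apply/(dashed_stack inv); rewrite map_rcons mem_rcons mem_head.
  by have := weight_upd em e EBlue; rewrite dashed_e /=; lia.
- left; eexists; split; first reflexivity.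
  case/lastP: st {fwd} inv top_u back_off => [| st [u e]] inv top_u back_off.
    by exists vm, em.
  by have [Y app] := back_enabled inv; case: (exec_Call1_fail back_off app).
Qed.

Lemma dfs_loop_spec n m X r : m < n -> dfs_state m X -> exec n (Loop DFS) X r ->
  exists Y, r = ROk Y /\ dfs_finished Y.
Proof.
move=> lt_mn IX run.
have [_ [Y [-> [_ fin]]]] : exists m' Y, r = ROk Y /\ m' <= m /\ dfs_finished Y.
  apply: (exec_Loop_variant (Q := fun _ => dfs_finished)) lt_mn IX run.
  move=> {}n {}m {}X {}r lt_mn' /(dfs_body_spec lt_mn') /[apply].
  by case=> [? | ?]; right; [left | right].
by exists Y.
Qed.

Lemma dfs_finished_blue vm em : dfs_inv [::] vm em -> top_done [::] em ->
  forall x, vm x = NBlue <-> connect (@uadj G) s x.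
Proof.
move=> inv top_s x; split=> [/(blue_reachable inv) // | /connectP [p]].
have blue_adj y z : vm y = NBlue -> uadj y z -> vm z = NBlue.
  move=> blue_y /uadj_joins [e j]; have [<- // | yz] := eqVneq y z.
  have marked : em e <> EUnmarked.
    have [ys | ys] := eqVneq y s; first by apply: top_s; rewrite /top /= -ys; exists z.
    by apply: (off_stack_done inv blue_y _ (ex_intro2 _ _ z yz j)); rewrite inE.
  by have [] := marked_edge_blue inv marked; case: j => [[-> ->] | [-> ->]].
have blue_s : vm s = NBlue by apply: (stack_blue inv); rewrite mem_head.
elim: p (s) blue_s => [|y p IHp] z blue_z /=; first by move=> _ ->.
by case/andP=> /(blue_adj _ _ blue_z) /IHp.
Qed.

Lemma check_spec n vm em r : dfs_inv [::] vm em -> top_done [::] em ->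
  exec n Check (state vm em s) r ->
  (gconnected G /\ r = ROk (state vm em s)) \/ (~ gconnected G /\ r = RFail).
Proof.
move=> inv top_s; have blue_iff := dfs_finished_blue inv top_s.
case/exec_If_inv => [[Y [/exec_Call1_ok [x [/= grey_x _]] /exec_FailC_inv ->]] |
  [[none /exec_Skip_inv ->] | [[Y [_ /exec_Call_noBrk []]] | [_ /exec_Call_noDiv []]]]].
- right; split=> // /(gconnected_from s) conn.
  by have := (blue_iff x).2 (conn x); rewrite grey_x.
- left; split=> //; apply/(gconnected_from s) => x; apply/blue_iff.
  case: (grey_or_blue inv x) => // grey_x.
  by case: (exec_Call1_fail none (ex_intro _ x (conj grey_x erefl))).
Qed.

End DepthFirstSearch.

Lemma init_spec G X : initial_graph G -> apply_rule r_init G X ->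
  exists s : V G, dfs_state s (weight (@emk G)) X.
Proof.
move=> [col_G unm_G] [s [_ ->]]; exists s, [::], (upd (@vmark G) s NBlue), (@emk G).
split.
  rewrite /state; congr remark; apply: functional_extensionality => x.
  by rewrite /upd; case: ifP => // _; case: (col_G x).
split=> //; split=> //.
- by move=> x; rewrite /upd; case: ifP => _; [right | left; case: (col_G x)].
- by move=> e; rewrite unm_G.
- by move=> x; rewrite /upd; case: eqP => [-> _ | _]; [apply: connect0 | case: (col_G x) => ->].
- by move=> e; rewrite unm_G.
- by move=> x; rewrite inE => /eqP ->; rewrite /upd eqxx.
- by move=> x e; rewrite /upd inE; case: eqP => // _; case: (col_G x) => ->.
Qed.

Lemma iso_remark G vm em rt : iso_up_to_marks G (@remark G vm em rt).
Proof. by exists id, id; split; [exists id | split; [exists id | do !split]]. Qed.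

Lemma iso_refl G : iso_up_to_marks G G.
Proof. by case: G => *; apply: iso_remark. Qed.

Definition correct_verdict (G : hgraph) (r : result) : Prop :=
  (gconnected G /\ exists H, r = ROk H /\ iso_up_to_marks G H) \/ (~ gconnected G /\ r = RFail).

Lemma is_connected_correct n G r : initial_graph G -> weight (@emk G) < n ->
  exec n is_connected G r -> correct_verdict G r.
Proof.
move=> init lt_wn /exec_Try_inv.
case=> [[X [/exec_Call1_ok /(init_spec init) [s IX] /exec_Seq_inv run]] |
  [[init_off /exec_Skip_inv ->] | [[X [_ /exec_Call_noBrk []]] | [_ /exec_Call_noDiv []]]]].
- case: run => [[Y [dfs check]] | [[_ dfs] | [[Y [_ dfs]] | [_ dfs]]]];
    have [Z [// [def_Y] [vm [em [def_Z [inv top_s]]]]]] := dfs_loop_spec lt_wn IX dfs.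
  subst Z Y; case: (check_spec inv top_s check) => [[conn ->] | [nconn ->]]; last by right.
  by left; split=> //; eexists; split; [reflexivity | apply: iso_remark].
- left; split; last by exists G; split=> //; apply: iso_refl.
  move=> x; have [col_x _] := init.1 x.
  by case: (exec_Call1_fail init_off (ex_intro _ x (conj col_x erefl))).
Qed.

Theorem mainTheorem1 (G : hgraph) :
  initial_graph G ->
  exists n : nat,
    (exists res, exec n is_connected G res) /\
    (forall res, exec n is_connected G res ->
       res <> RDiv /\
       (gconnected G -> exists H, res = ROk H /\ iso_up_to_marks G H) /\
       (~ gconnected G -> res = RFail)).
Proof.
move=> init; exists (weight (@emk G)).+1; split=> [|r run]; first exact: exec_total.
case: (is_connected_correct init (ltnSn _) run) => [[conn [H [-> iso]]] | [nconn ->]].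
- by split=> //; split=> [_ | /(_ conn)]; first by exists H.
- by split=> //; split=> // /nconn.
Qed.
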